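(* Let $\mathfrak{q}$ be an $n\times n$ quantum parameter matrix over a field $k$ and $V$ a $k$-vector space with basis $v_1,\dots,v_n$. There exists an injective group homomorphism $\iota:\mathrm{Stab}(\mathfrak{q})\to\mathrm{Aut}_{\mathrm{gr}}(S_{\mathfrak{q}}(V))$ such that for each $\sigma\in\mathrm{Stab}(\mathfrak{q})$, $\iota(\sigma)$ lies in $\prod_{B\in\mathcal{B}_{\mathfrak{q}}}\mathrm{Hom}(V_B,V_{\sigma(B)})$, i.e. $\iota(\sigma)$ maps $V_B$ to $V_{\sigma(B)}$ for every block $B$ of $\mathfrak{q}$.
   Context: An $n\times n$ quantum parameter matrix is a matrix $\mathfrak{q}=(q_{ij})$ over $k$ with $q_{ii}=1$ and $q_{ij}q_{ji}=1$ for all $i,j$. $S_{\mathfrak{q}}(V)$ is the $k$-algebra generated by $v_1,\dots,v_n$ with relations $v_jv_i=q_{ij}v_iv_j$, graded by $\deg v_i=1$; $\mathrm{Aut}_{\mathrm{gr}}(S_{\mathfrak{q}}(V))$ is the group of degree-preserving algebra automorphisms, viewed as a subgroup of $\mathrm{GL}(V)$ by restriction. $\mathcal{B}_{\mathfrak{q}}$ is the partition of $[n]$ with $i\sim j$ iff rows $i,j$ of $\mathfrak{q}$ are identical; its classes are the blocks. $V_B=\mathrm{span}\{v_i:i\in B\}$ and $\mathfrak{q}_{BC}=(q_{ij})_{i\in B,j\in C}$. With $r=|\mathcal{B}_{\mathfrak{q}}|$, $\mathfrak{S}_r$ permutes the blocks, and $\mathrm{Stab}(\mathfrak{q})=\{\sigma\in\mathfrak{S}_r:|\sigma(B)|=|B|\text{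 and }\mathfrak{q}_{BC}=\mathfrak{q}_{\sigma(B)\sigma(C)}\text{ for all blocks }B,C\}$. *)

From HB Require Import structures.
From mathcomp Require Import all_boot all_order all_algebra all_fingroup.
Set Implicit Arguments. Unset Strict Implicit. Unset Printing Implicit Defensive.
Import GRing.Theory.
Local Open Scope ring_scope.

(* V = k^n with basis v_i = i-th standard column vector; a linear map of V is a
   matrix G whose i-th column is the coordinate vector of G(v_i). *)

Definition qpm (k : fieldType) (n : nat) (q : 'M[k]_n) : Prop :=
  (forall i, q i i = 1) /\ (forall i j, q i j * q j i = 1).

(* V (x) V is identified with 'M_n via v_a (x) v_b <-> delta_mx a b. *)
Definition tens (k : fieldType) (n : nat) (x y : 'cV[k]_n) : 'M[k]_n := x *m y^T.

(* defining relation  v_j v_i - q_ij v_i v_j  as an element of V (x) V *)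
Definition rel_gen (k : fieldType) (n : nat) (q : 'M[k]_n) (i j : 'I_n) : 'M[k]_n :=
  delta_mx j i - q i j *: delta_mx i j.

(* membership in the relation space R_q = degree-2 part of the ideal of relations *)
Definition in_rel (k : fieldType) (n : nat) (q : 'M[k]_n) (M : 'M[k]_n) : Prop :=
  exists c : 'I_n -> 'I_n -> k,
    M = \sum_(i < n) \sum_(j < n) c i j *: rel_gen q i j.

(* the images G(v_1),...,G(v_n) satisfy the defining relations of S_q(V),
   i.e. (universal property of the presentation) v_i |-> G(v_i) extends to a
   graded algebra endomorphism of S_q(V) *)
Definition respects_rel (k : fieldType) (n : nat) (q : 'M[k]_n) (G : 'M[k]_n) : Prop :=
  forall i j : 'I_n,
    in_rel q (tens (col j G) (col i G) - q i j *: tens (col i G) (col j G)).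

(* Aut_gr(S_q(V)) as a subgroup of GL(V): G invertible, and both G and G^{-1}
   extend to graded algebra endomorphisms (which are then mutually inverse). *)
Definition Autgr (k : fieldType) (n : nat) (q : 'M[k]_n) (G : 'M[k]_n) : Prop :=
  G \in unitmx /\ respects_rel q G /\ respects_rel q (invmx G).

Definition blk (k : fieldType) (n : nat) (q : 'M[k]_n) (i : 'I_n) : {set 'I_n} :=
  [set j | row j q == row i q].

Definition blocks (k : fieldType) (n : nat) (q : 'M[k]_n) : {set {set 'I_n}} :=
  [set blk q i | i : 'I_n].

(* q_{BC} = q_{B'C'} as matrices (rows/columns indexed in increasing order) *)
Definition subq_eq (k : fieldType) (n : nat) (q : 'M[k]_n) (B C B' C' : {set 'I_n}) : Prop :=
  forall (a b : nat) (i j i' j' : 'I_n),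
    onth (enum B) a = Some i -> onth (enum C) b = Some j ->
    onth (enum B') a = Some i' -> onth (enum C') b = Some j' ->
    q i j = q i' j'.

Definition in_Stab (k : fieldType) (n : nat) (q : 'M[k]_n) (s : {perm {set 'I_n}}) : Prop :=
  perm_on (blocks q) s /\
  (forall B, B \in blocks q -> #|s B| = #|B|) /\
  (forall B C, B \in blocks q -> C \in blocks q -> subq_eq q B C (s B) (s C)).

(* A permutation s in Stab(q) induces a permutation pi of the indices: pi sends
   the a-th element of a block B (in increasing order) to the a-th element of
   s(B).  Since s preserves block sizes and the submatrices q_BC, pi satisfies
   q_(pi i)(pi j) = q_ij, so the matrix of v_i |-> v_(pi i) maps every defining
   relation v_j v_i - q_ij v_i v_j to another one, and likewise for its inverse
   pi^-1: it is a graded automorphism of S_q(V).  The assignment s |-> pi is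
   multiplicative, and pi determines s because s(B_i) is the block of pi(i). *)

From HB Require Import structures.
From mathcomp Require Import all_boot all_order all_algebra all_fingroup.
Import GRing.Theory.
Local Open Scope ring_scope.
Set Implicit Arguments. Unset Strict Implicit.

Lemma onth_nth_lt (T : Type) (x0 : T) (s : seq T) m :
  (m < size s)%N -> onth s m = Some (nth x0 s m).
Proof. by move=> lt_ms; rewrite onthE (nth_map x0). Qed.

Section IndexMatrix.
Variables (k : fieldType) (n : nat).

Definition idx_mx (f : 'I_n -> 'I_n) : 'M[k]_n := \matrix_(a, i) (a == f i)%:R.

Lemma eq_idx_mx f g : f =1 g -> idx_mx f = idx_mx g.
Proof. by move=> efg; apply/matrixP => a i; rewrite !mxE efg. Qed.

Lemma idx_mx_id : idx_mx id = 1%:M.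
Proof. by apply/matrixP => a i; rewrite !mxE. Qed.

Lemma idx_mxM f g : idx_mx f *m idx_mx g = idx_mx (f \o g).
Proof.
apply/matrixP => a i; rewrite !mxE (bigD1 (g i)) //= !mxE eqxx mulr1.
rewrite big1 ?addr0 // => b /negbTE nb.
by rewrite !mxE eq_sym nb mulr0.
Qed.

Lemma idx_mx_neq0 f a i : idx_mx f a i != 0 -> a = f i.
Proof. by rewrite mxE; case: (a =P f i) => // _; rewrite eqxx. Qed.

Lemma idx_mx_inj f g : idx_mx f = idx_mx g -> f =1 g.
Proof.
move=> efg i; apply: idx_mx_neq0.
by rewrite -efg mxE eqxx oner_neq0.
Qed.

Lemma col_idx_mx f j : col j (idx_mx f) = delta_mx (f j) 0.
Proof. by apply/matrixP => a b; rewrite !mxE (ord1 b) eqxx andbT. Qed.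

Lemma idx_mx_permV (p : {perm 'I_n}) : idx_mx p *m idx_mx (p^-1)%g = 1%:M.
Proof. by rewrite idx_mxM -idx_mx_id; apply: eq_idx_mx => x /=; rewrite permKV. Qed.

Lemma unitmx_idx_mx_perm (p : {perm 'I_n}) : idx_mx p \in unitmx.
Proof. exact: (mulmx1_unit (idx_mx_permV p)).1. Qed.

Lemma invmx_idx_mx_perm (p : {perm 'I_n}) : invmx (idx_mx p) = idx_mx (p^-1)%g.
Proof.
by rewrite -[RHS](mulKmx (unitmx_idx_mx_perm p)) idx_mx_permV mulmx1.
Qed.

End IndexMatrix.

Arguments idx_mx {k n} f.

Section RelationPreserving.
Variables (k : fieldType) (n : nat) (q : 'M[k]_n).

Lemma in_rel_gen a b : in_rel q (rel_gen q a b).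
Proof.
exists (fun i j => ((i == a) && (j == b))%:R).
rewrite (bigD1 a) //= (bigD1 b) //= !eqxx scale1r.
rewrite big1 ?addr0 => [|j /negbTE ->]; last by rewrite scale0r.
rewrite big1 ?addr0 // => i /negbTE ->; apply: big1 => j _.
by rewrite scale0r.
Qed.

Lemma respects_rel_idx_mx f :
  (forall i j, q (f i) (f j) = q i j) -> respects_rel q (idx_mx f).
Proof.
move=> qf i j; rewrite /tens !col_idx_mx !trmx_delta !mul_delta_mx -qf.
exact: in_rel_gen.
Qed.

Lemma Autgr_idx_mx_perm (p : {perm 'I_n}) :
  (forall i j, q (p i) (p j) = q i j) -> Autgr q (idx_mx p).
Proof.
move=> qp; split; first exact: unitmx_idx_mx_perm.
split; first exact: respects_rel_idx_mx.
rewrite invmx_idx_mx_perm; apply: respects_rel_idx_mx => i j.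
by rewrite -qp !permKV.
Qed.

End RelationPreserving.

Section Blocks.
Variables (k : fieldType) (n : nat) (q : 'M[k]_n).

Lemma mem_blk i : i \in blk q i.
Proof. by rewrite inE. Qed.

Lemma blk_in_blocks i : blk q i \in blocks q.
Proof. exact: imset_f. Qed.

Lemma blk_of_mem i x : x \in blk q i -> blk q x = blk q i.
Proof. by rewrite inE => /eqP qx; apply/setP => j; rewrite !inE qx. Qed.

Lemma block_of_mem B i : B \in blocks q -> i \in B -> B = blk q i.
Proof. by case/imsetP => j _ -> /blk_of_mem ->. Qed.

(* Positions within a block are taken in [enum] order, as in [subq_eq]; the
   default [i] of [nth] is only reached when [s] does not preserve block sizes. *)
Definition stab_map (s : {perm {set 'I_n}}) (i : 'I_n) : 'I_n :=
  nth i (enum (s (blk q i))) (index i (enum (blk q i))).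

Definition stab_mx (s : {perm {set 'I_n}}) : 'M[k]_n := idx_mx (stab_map s).

Section OneStabilizer.
Variable s : {perm {set 'I_n}}.
Hypothesis s_stab : in_Stab q s.

Lemma index_blk_lt i :
  (index i (enum (blk q i)) < size (enum (s (blk q i))))%N.
Proof.
case: s_stab => _ [s_card _].
by rewrite -cardE s_card ?blk_in_blocks // cardE index_mem mem_enum mem_blk.
Qed.

Lemma stab_map_in i : stab_map s i \in s (blk q i).
Proof. by rewrite -mem_enum mem_nth // index_blk_lt. Qed.

Lemma stab_blk_in_blocks i : s (blk q i) \in blocks q.
Proof. by case: s_stab => s_on _; rewrite (perm_closed _ s_on) blk_in_blocks. Qed.

Lemma blk_stab_map i : blk q (stab_map s i) = s (blk q i).
Proof. by rewrite -(block_of_mem (stab_blk_in_blocks i) (stab_map_in i)). Qed.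

Lemma index_stab_map i :
  index (stab_map s i) (enum (s (blk q i))) = index i (enum (blk q i)).
Proof. by rewrite index_uniq ?enum_uniq ?index_blk_lt. Qed.

Lemma stab_map_inj : injective (stab_map s).
Proof.
move=> i j eij.
have sBij : s (blk q i) = s (blk q j) by rewrite -!blk_stab_map eij.
have Bij : blk q i = blk q j := perm_inj sBij.
have idx_ij := index_stab_map i; rewrite eij sBij index_stab_map Bij in idx_ij.
have j_in : j \in enum (blk q j) by rewrite mem_enum mem_blk.
have i_in : i \in enum (blk q j) by rewrite mem_enum -Bij mem_blk.
by rewrite -(nth_index i i_in) -idx_ij (set_nth_default j) ?index_mem ?nth_index.
Qed.

Lemma stab_map_q i j : q (stab_map s i) (stab_map s j) = q i j.
Proof.
case: s_stab => _ [_ s_subq].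
have onth_index x : onth (enum (blk q x)) (index x (enum (blk q x))) = Some x.
  by rewrite (onth_nth_lt x) ?nth_index ?index_mem ?mem_enum ?mem_blk.
have onth_stab x :
    onth (enum (s (blk q x))) (index x (enum (blk q x))) = Some (stab_map s x).
  exact: onth_nth_lt (index_blk_lt x).
symmetry; exact: s_subq (blk_in_blocks i) (blk_in_blocks j) _ _ _ _ _ _
  (onth_index i) (onth_index j) (onth_stab i) (onth_stab j).
Qed.

Lemma Autgr_stab_mx : Autgr q (stab_mx s).
Proof.
have -> : stab_mx s = idx_mx (perm stab_map_inj).
  by apply: eq_idx_mx => x; rewrite permE.
by apply: Autgr_idx_mx_perm => i j; rewrite !permE stab_map_q.
Qed.

Lemma stab_mx_block B i a :
  B \in blocks q -> i \in B -> stab_mx s a i != 0 -> a \in s B.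
Proof.
move=> B_block iB /idx_mx_neq0 ->.
by rewrite (block_of_mem B_block iB) stab_map_in.
Qed.

End OneStabilizer.

Lemma stab_mapM s t : in_Stab q s -> in_Stab q t ->
  stab_map (t * s)%g =1 stab_map s \o stab_map t.
Proof.
move=> s_stab t_stab i /=.
rewrite {1}/stab_map [in RHS]/stab_map blk_stab_map // index_stab_map // permM.
apply: set_nth_default.
by have := index_blk_lt s_stab (stab_map t i); rewrite !blk_stab_map // index_stab_map.
Qed.

Lemma stab_mxM s t : in_Stab q s -> in_Stab q t ->
  stab_mx (t * s)%g = stab_mx s *m stab_mx t.
Proof. by move=> s_stab t_stab; rewrite idx_mxM; apply/eq_idx_mx/stab_mapM. Qed.

Lemma stab_mx_inj s t : in_Stab q s -> in_Stab q t ->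
  stab_mx s = stab_mx t -> s = t.
Proof.
move=> s_stab t_stab /idx_mx_inj est; apply/permP => B.
have [/imsetP[i _ ->] | B_out] := boolP (B \in blocks q).
  by rewrite -!blk_stab_map ?est.
case: s_stab t_stab => [s_on _] [t_on _].
by rewrite (out_perm s_on) ?(out_perm t_on).
Qed.

End Blocks.

Unset Implicit Arguments. Set Strict Implicit.

Theorem lemma2p5 (k : fieldType) (n : nat) (q : 'M[k]_n) :
  qpm q ->
  exists iota : {perm {set 'I_n}} -> 'M[k]_n,
    (forall s, in_Stab q s -> Autgr q (iota s)) /\
    (* group homomorphism; note (t * s)%g is the permutation "s after t" *)
    (forall s t, in_Stab q s -> in_Stab q t -> iota (t * s)%g = iota s *m iota t) /\
    (forall s t, in_Stab q s -> in_Stab q t -> iota s = iota t -> s = t) /\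
    (forall s B, in_Stab q s -> B \in blocks q ->
       forall (i a : 'I_n), i \in B -> iota s a i != 0 -> a \in s B).
Proof.
(* The construction does not use that q is a quantum parameter matrix. *)
move=> _; exists (stab_mx q).
split; first exact: Autgr_stab_mx.
split; first exact: stab_mxM.
split; first exact: stab_mx_inj.
by move=> s B s_stab B_block i a; exact: stab_mx_block.
Qed.
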